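(* Let $G$ be a graph and $(x,y)\in E(G)$ with $d_x=d_y=d$. Let $\Delta_G(x,y)=N_G(x)\cap N_G(y)$, $Q_G(x)=N_G(x)\setminus\Delta_G(x,y)$ and $Q_G(y)=N_G(y)\setminus\Delta_G(x,y)$. Then $\kappa(x,y)=\frac{|\Delta_G(x,y)|}{d}$ if and only if there is a perfect matching between $Q_G(x)$ and $Q_G(y)$, i.e. a bijection $\sigma:Q_G(x)\to Q_G(y)$ with $(a,\sigma(a))\in E(G)$ for all $a\in Q_G(x)$.
   Context: Graphs are locally finite and unweighted. $d_G$ is the shortest-path metric, $N_G(v)$ the neighbour set and $d_v$ the degree of $v$; $m_v$ is the uniform probability measure on $N_G(v)$, and for an edge $(x,y)$, $\kappa(x,y)=1-W_1(m_x,m_y)$, where $W_1$ is the Wasserstein-1 (transportation) distance with respect to $d_G$. Note that $y\in Q_G(x)$ and $x\in Q_G(y)$. *)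

From HB Require Import structures.
From mathcomp Require Import all_boot all_order all_algebra.
From mathcomp Require Import all_classical all_reals ereal.
Set Implicit Arguments. Unset Strict Implicit. Unset Printing Implicit Defensive.
Import Order.TTheory GRing.Theory Num.Theory.
Local Open Scope ring_scope.
Local Open Scope classical_set_scope.

(* A locally finite simple (unweighted, undirected, loopless) graph on a vertex
   type T is given by its neighbour lists nbr v = N_G(v) (finite by construction). *)
Definition simple_graph (T : eqType) (nbr : T -> seq T) : Prop :=
  [/\ forall v, uniq (nbr v),
      forall u v, (v \in nbr u) = (u \in nbr v)
    & forall v, v \notin nbr v].

Definition adj (T : eqType) (nbr : T -> seq T) : rel T := fun u v => v \in nbr u.

Definition deg (T : eqType) (nbr : T -> seq T) (v : T) : nat := size (nbr v).

(* shortest-path metric d_G(u,v) in \bar R (+oo if no path) *)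
Definition gdist (R : realType) (T : eqType) (nbr : T -> seq T) (u v : T) : \bar R :=
  ereal_inf [set ((size p)%:R)%:E | p in [set p : seq T | path (adj nbr) u p /\ last u p = v]].

Definition unif_nbr (R : realType) (T : eqType) (nbr : T -> seq T) (v : T) : T -> R :=
  fun a => if a \in nbr v then (deg nbr v)%:R^-1 else 0.

Definition coupling (R : realType) (T : eqType) (s t : seq T) (mu nu : T -> R)
  (pi : T -> T -> R) : Prop :=
  [/\ forall a b, 0 <= pi a b,
      forall a b, (a \notin s) || (b \notin t) -> pi a b = 0,
      forall a, a \in s -> \sum_(b <- t) pi a b = mu a
    & forall b, b \in t -> \sum_(a <- s) pi a b = nu b].

Definition W1 (R : realType) (T : eqType) (d : T -> T -> \bar R)
  (s t : seq T) (mu nu : T -> R) : \bar R :=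
  ereal_inf [set (\sum_(a <- s) \sum_(b <- t) (pi a b)%:E * d a b)%E
            | pi in [set pi | coupling s t mu nu pi]].

Definition kappa (R : realType) (T : eqType) (nbr : T -> seq T) (x y : T) : \bar R :=
  (1 - W1 (@gdist R T nbr) (nbr x) (nbr y) (unif_nbr R nbr x) (unif_nbr R nbr y))%E.

Definition Delta (T : eqType) (nbr : T -> seq T) (x y : T) : seq T :=
  [seq a <- nbr x | a \in nbr y].
Definition Q (T : eqType) (nbr : T -> seq T) (x y : T) : seq T :=
  [seq a <- nbr x | a \notin nbr y].

(* W1(m_x, m_y) >= |Q(x)|/d always, so kappa(x,y) = |Delta|/d iff W1(m_x, m_y) = |Q(x)|/d.
   A perfect matching sigma gives the plan that keeps Delta in place and moves each
   a in Q(x) to sigma a at distance 1, which costs exactly |Q(x)|/d.  Conversely, for a set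
   S of Q(x) with neighbourhood N(S) in Q(y), the 1-Lipschitz potential pair
   f = 1 + 1_S on N(x), g = 1_(N(x) \/ N(S)) on N(y) and Kantorovich weak duality give
   W1 >= (|Q(x)| + |S| - |N(S)|)/d.  Hence W1 = |Q(x)|/d is Hall's condition for the
   bipartite graph between Q(x) and Q(y); Hall's marriage theorem gives an injection
   Q(x) -> Q(y), which is onto because |Q(x)| = |Q(y)|. *)

From HB Require Import structures.
From mathcomp Require Import all_boot all_order all_algebra.
Set Implicit Arguments. Unset Strict Implicit. Unset Printing Implicit Defensive.
Import Order.TTheory GRing.Theory Num.Theory.

Section HallMarriage.
Variables (TA TB : finType) (r : TA -> TB -> bool).

Definition nbhd (B : {set TB}) (S : {set TA}) : {set TB} :=
  [set b in B | [exists a in S, r a b]].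

Definition hall_cond (A : {set TA}) (B : {set TB}) : Prop :=
  forall S : {set TA}, S \subset A -> #|S| <= #|nbhd B S|.

Definition matching_into (A : {set TA}) (B : {set TB}) (f : TA -> TB) : Prop :=
  {in A, forall a, f a \in B /\ r a (f a)} /\ {in A &, injective f}.

Lemma nbhd_sub B S : nbhd B S \subset B.
Proof. by apply/subsetP => b; rewrite inE => /andP []. Qed.

Lemma nbhd_nbhd B (S T : {set TA}) : T \subset S -> nbhd (nbhd B S) T = nbhd B T.
Proof.
move=> sTS; apply/setP => b; rewrite !inE -andbA; congr (_ && _).
apply/andb_idl => /existsP [a /andP [aT rab]].
by apply/existsP; exists a; rewrite (subsetP sTS).
Qed.

Lemma matching_into_glue (A A1 : {set TA}) (B B1 : {set TB}) f1 f2 :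
    A1 \subset A -> B1 \subset B ->
    matching_into A1 B1 f1 -> matching_into (A :\: A1) (B :\: B1) f2 ->
  matching_into A B (fun a => if a \in A1 then f1 a else f2 a).
Proof.
move=> sA1 sB1 [f1B f1inj] [f2B f2inj].
have f2B' a : a \in A -> a \notin A1 -> f2 a \in B :\: B1 /\ r a (f2 a).
  by move=> aA aA1; apply: f2B; rewrite inE aA1.
split=> [a aA | a1 a2 a1A a2A].
  case: ifP => [aA1 | /negbT aA1]; last by have [/setDP [] ] := f2B' a aA aA1.
  by have [fB ra] := f1B a aA1; rewrite (subsetP sB1).
case: ifP => [a1A1 | /negbT a1A1]; case: ifP => [a2A1 | /negbT a2A1].
- exact: f1inj.
- have [f1B1 _] := f1B a1 a1A1; have [/setDP [_ f2B1] _] := f2B' a2 a2A a2A1.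
  by move=> e; rewrite e (negbTE f2B1) in f1B1.
- have [f1B2 _] := f1B a2 a2A1; have [/setDP [_ f2B1] _] := f2B' a1 a1A a1A1.
  by move=> e; rewrite -e (negbTE f2B1) in f1B2.
- by apply: f2inj; rewrite inE ?a1A1 ?a2A1.
Qed.

Lemma hall_cond_sub (A S : {set TA}) (B : {set TB}) :
  S \subset A -> hall_cond A B -> hall_cond S (nbhd B S).
Proof.
by move=> sSA hAB T sTS; rewrite nbhd_nbhd // hAB // (subset_trans sTS).
Qed.

Lemma hall_cond_setD (A S : {set TA}) (B : {set TB}) :
  S \subset A -> #|nbhd B S| <= #|S| -> hall_cond A B ->
  hall_cond (A :\: S) (B :\: nbhd B S).
Proof.
move=> sSA tightS hAB T sTAS.
have dTS : [disjoint T & S] by move: sTAS; rewrite subsetD => /andP [].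
have sTA : T \subset A by apply: subset_trans sTAS (subsetDl _ _).
have eN : nbhd B (T :|: S) = nbhd (B :\: nbhd B S) T :|: nbhd B S.
  apply/setP => b; rewrite !inE; case: (b \in B) => //=.
  have [NSb | nNSb] := boolP [exists a in S, r a b]; rewrite /= ?orbT ?orbF.
    by case/existsP: NSb => a /andP [aS rab]; apply/existsP; exists a; rewrite inE aS orbT.
  apply/existsP/existsP => [[a /andP [/setUP [aT|aS] rab]] | [a /andP [aT rab]]].
  - by exists a; rewrite aT.
  - by case/negP: nNSb; apply/existsP; exists a; rewrite aS.
  - by exists a; rewrite inE aT.
have := hAB (T :|: S); rewrite subUset sTA sSA cardsU (disjoint_setI0 dTS) cards0 subn0 eN.
move=> /(_ isT) /leq_trans /(_ (leq_card_setU _ _)) hTS.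
by rewrite -(leq_add2r #|S|) (leq_trans hTS) // leq_add2l.
Qed.

Lemma hall_cond_setD1 (A : {set TA}) (B : {set TB}) a0 b0 : a0 \in A ->
  (forall S : {set TA}, S \subset A -> S != set0 -> S != A -> #|S| < #|nbhd B S|) ->
  hall_cond (A :\ a0) (B :\ b0).
Proof.
move=> a0A slackA T sTA; have [->|nT0] := eqVneq T set0; first by rewrite cards0.
have nTA : T != A by apply: contraTneq sTA => ->; apply/subsetPn; exists a0; rewrite ?inE ?eqxx.
have /slackA /(_ nT0 nTA) := subset_trans sTA (subD1set A a0).
have -> : nbhd (B :\ b0) T = nbhd B T :\ b0 by apply/setP => b; rewrite !inE andbA.
rewrite (cardsD1 b0 (nbhd B T)) => lt; rewrite -ltnS (leq_trans lt) //.
by case: (_ \in _).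
Qed.

Lemma hall_matching (b0 : TB) (A : {set TA}) (B : {set TB}) :
  hall_cond A B -> exists f, matching_into A B f.
Proof.
elim: {A}_.+1 {-2}A (ltnSn #|A|) B => // n IH A ltAn B hAB.
have [->|/set0Pn [a0 a0A]] := eqVneq A set0.
  by exists (fun=> b0); split=> a; rewrite inE.
have [/existsP [S /and4P [sSA nS0 nSA tightS]] | /existsPn noTight] :=
  boolP [exists S : {set TA}, [&& S \subset A, S != set0, S != A & #|nbhd B S| <= #|S|]].
  have ltSA : #|S| < #|A| by rewrite proper_card // properEneq nSA.
  have ltASA : #|A :\: S| < #|A|.
    by rewrite cardsD (setIidPr sSA) ltn_subrL card_gt0 nS0 (leq_ltn_trans _ ltSA).
  have [f1 mf1] := IH S (leq_trans ltSA ltAn) _ (hall_cond_sub sSA hAB).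
  have [f2 mf2] := IH _ (leq_trans ltASA ltAn) _ (hall_cond_setD sSA tightS hAB).
  by eexists; apply: matching_into_glue (nbhd_sub B S) mf1 mf2.
have slackA (S : {set TA}) : S \subset A -> S != set0 -> S != A -> #|S| < #|nbhd B S|.
  by move=> sSA nS0 nSA; move: (noTight S); rewrite sSA nS0 nSA /= -ltnNge.
have /card_gt0P [b1 /setIdP [b1B /existsP [? /andP [/set1P -> ra0b1]]]] :
    0 < #|nbhd B [set a0]| by rewrite -(cards1 a0) hAB // sub1set.
have ltA1 : #|A :\ a0| < #|A| by rewrite (cardsD1 a0 A) a0A.
have [f2 mf2] := IH _ (leq_trans ltA1 ltAn) (B :\ b1) (hall_cond_setD1 b1 a0A slackA).
exists (fun a => if a \in [set a0] then b1 else f2 a).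
apply: matching_into_glue mf2; rewrite ?sub1set //.
by split=> [? /set1P -> | ? ? /set1P -> /set1P ->]; rewrite ?set11.
Qed.

End HallMarriage.

Lemma count_nth_card (T : eqType) (x0 : T) (p : pred T) (s : seq T) :
  count p s = #|[set i : 'I_(size s) | p (nth x0 s i)]|.
Proof.
rewrite cardE /enum_mem -enumT size_filter.
rewrite -{1}(mkseq_nth x0 s) /mkseq -val_enum_ord -map_comp count_map.
by apply: eq_count => i /=; rewrite inE.
Qed.

Lemma hall_matching_seq (T : eqType) (r : rel T) (sa sb : seq T) :
    uniq sa -> uniq sb ->
    (forall S : pred T, count S sa <= count (fun b => has (fun a => S a && r a b) sa) sb) ->
  exists f : T -> T, {in sa, forall a, f a \in sb /\ r a (f a)} /\ {in sa &, injective f}.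
Proof.
move=> usa usb hall; have [-> | sa_ne0] := eqVneq sa [::].
  by exists id; split=> a.
have sa_gt0 : 0 < size sa by rewrite lt0n size_eq0.
have x0 : T by case: sa sa_ne0 {usa hall sa_gt0} => // a.
have sb_gt0 : 0 < size sb.
  by apply: leq_trans (leq_trans (hall predT) (count_size _ _)); rewrite count_predT.
pose r' (i : 'I_(size sa)) (j : 'I_(size sb)) := r (nth x0 sa i) (nth x0 sb j).
have hall' : hall_cond r' setT setT.
  move=> S _; pose P a := [exists i in S, nth x0 sa i == a].
  have -> : S = [set i : 'I_(size sa) | P (nth x0 sa i)].
    apply/setP => i; rewrite inE; apply/idP/existsP => [iS | [i' /andP [i'S]]].
      by exists i; rewrite iS eqxx.
    by rewrite nth_uniq // => /eqP /val_inj <-.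
  rewrite -count_nth_card (leq_trans (hall P)) // (count_nth_card x0 _ sb).
  apply/subset_leq_card/subsetP => j; rewrite !inE => /hasP [a a_sa /andP [Pa rab]].
  case/existsP: Pa => i /andP [iS /eqP eia]; apply/existsP; exists i.
  by rewrite /r' eia rab andbT inE; apply/existsP; exists i; rewrite iS eqxx.
have [f [fB finj]] := hall_matching (Ordinal sb_gt0) hall'.
pose idx a : 'I_(size sa) := insubd (Ordinal sa_gt0) (index a sa).
have nth_idx a : a \in sa -> nth x0 sa (idx a) = a.
  by move=> a_sa; rewrite val_insubd index_mem a_sa nth_index.
exists (fun a => nth x0 sb (f (idx a))); split=> [a a_sa | a1 a2 a1_sa a2_sa].
  by have [_] := fB (idx a) (in_setT _); rewrite /r' nth_idx // => rab; rewrite mem_nth.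
move/eqP; rewrite nth_uniq // => /eqP /val_inj /(finj _ _ (in_setT _) (in_setT _)) e.
by rewrite -(nth_idx a1) // e nth_idx.
Qed.

Lemma inj_in_size_onto (T : eqType) (f : T -> T) (s t : seq T) :
    uniq s -> size t <= size s -> {in s &, injective f} -> {in s, forall a, f a \in t} ->
  {in t, forall b, exists2 a, a \in s & f a = b}.
Proof.
move=> us le_ts finj fst b bt.
have ufs : uniq (map f s) by rewrite map_inj_in_uniq.
have sub_fst : {subset map f s <= t} by move=> _ /mapP [a a_s ->]; apply: fst.
have [_ eqt] := uniq_min_size ufs sub_fst (leq_trans le_ts (eq_leq (esym (size_map f s)))).
have /mapP [a a_s ->] : b \in map f s by rewrite eqt.
by exists a.
Qed.

(* Imported only here: [classical_sets] shadows [fintype.subsetP], used above. *)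
From mathcomp Require Import all_classical all_reals ereal.
From mathcomp Require Import ring lra.
Local Open Scope ring_scope.

Lemma sumr_count (R : numDomainType) (I : Type) (s : seq I) (p : pred I) :
  \sum_(i <- s) ((p i)%:R : R) = (count p s)%:R.
Proof.
by elim: s => [|a s IH]; rewrite ?big_nil // big_cons IH /= natrD.
Qed.

Section Transport.
Variables (R : realType) (T : eqType) (c : T -> T -> \bar R).
Variables (s t : seq T) (mu nu : T -> R).

Lemma W1_ge_potential (f g : T -> R) :
    (forall a b, a \in s -> b \in t -> ((f a - g b)%:E <= c a b)%E) ->
  ((\sum_(a <- s) f a * mu a - \sum_(b <- t) g b * nu b)%:E <= W1 c s t mu nu)%E.
Proof.
move=> fg_le_c; apply: le_ereal_inf_tmp => _ [pi [pi_ge0 _ pi_row pi_col] <-].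
have -> : \sum_(a <- s) f a * mu a - \sum_(b <- t) g b * nu b
    = \sum_(a <- s) \sum_(b <- t) pi a b * (f a - g b).
  under [RHS]eq_bigr => a _ do under eq_bigr => b _ do rewrite mulrBr.
  under [RHS]eq_bigr => a _ do rewrite sumrB.
  rewrite sumrB; congr (_ - _).
    rewrite !big_seq; apply: eq_bigr => a a_s.
    by rewrite -pi_row // mulr_sumr; apply: eq_bigr => b _; rewrite mulrC.
  rewrite exchange_big /= !big_seq; apply: eq_bigr => b b_t.
  by rewrite -pi_col // mulr_sumr; apply: eq_bigr => a _; rewrite mulrC.
rewrite -sumEFin !big_seq; apply: lee_sum => a a_s.
rewrite -sumEFin !big_seq; apply: lee_sum => b b_t.
by rewrite EFinM lee_wpmul2l ?lee_fin ?fg_le_c.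
Qed.

Lemma W1_le_bijection (tau : T -> T) (w : R) :
    0 <= w -> uniq s -> uniq t ->
    {in s &, injective tau} -> {in s, forall a, tau a \in t} ->
    {in t, forall b, exists2 a, a \in s & tau a = b} ->
    {in s, forall a, mu a = w} -> {in t, forall b, nu b = w} ->
  (W1 c s t mu nu <= \sum_(a <- s) w%:E * c a (tau a))%E.
Proof.
move=> w_ge0 us ut tau_inj tau_st tau_onto mu_w nu_w.
pose pi a b := if (a \in s) && (tau a == b) then w else 0.
have pi_off a b : a \in s -> b != tau a -> pi a b = 0.
  by move=> a_s nb; rewrite /pi a_s eq_sym (negbTE nb).
have pi_coupling : coupling s t mu nu pi.
  split=> [a b | a b | a a_s | b b_t].
  - by rewrite /pi; case: ifP.
  - rewrite /pi; case: (boolP (a \in s)) => //= a_s b_t.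
    by case: eqP b_t => // <-; rewrite tau_st.
  - rewrite (bigD1_seq (tau a)) ?tau_st //= big1 ?addr0 => [|b]; last exact: pi_off.
    by rewrite /pi a_s eqxx mu_w.
  - have [a a_s <-] := tau_onto b b_t.
    rewrite (bigD1_seq a) //= big1 ?addr0 => [|a' na']; first by rewrite /pi a_s eqxx nu_w ?tau_st.
    case: (boolP (a' \in s)) => [a'_s | a'_s]; last by rewrite /pi (negbTE a'_s).
    by apply: pi_off => //; apply: contra na' => /eqP /tau_inj -> //.
apply: ge_ereal_inf; exists (\sum_(a <- s) w%:E * c a (tau a))%E => //; exists pi => //.
rewrite !big_seq; apply: eq_bigr => a a_s.
rewrite (bigD1_seq (tau a)) ?tau_st //= big1 ?adde0 => [|b nb]; last by rewrite pi_off // mul0e.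
by rewrite /pi a_s eqxx.
Qed.

End Transport.

Section GraphDistance.
Variables (R : realType) (T : eqType) (nbr : T -> seq T).

Lemma gdist_ge0 a b : (0 <= gdist R nbr a b)%E.
Proof. by apply: le_ereal_inf_tmp => _ [p _ <-]; rewrite lee_fin. Qed.

Lemma gdist_ge1 a b : a != b -> (1 <= gdist R nbr a b)%E.
Proof.
move=> nab; apply: le_ereal_inf_tmp => _ [[|z p] [_ /= eab] <-].
  by rewrite eab eqxx in nab.
by rewrite lee_fin ler1n.
Qed.

Lemma gdist_ge2 a b : a != b -> ~~ adj nbr a b -> (2%:E <= gdist R nbr a b)%E.
Proof.
move=> nab nadj; apply: le_ereal_inf_tmp => _ [[|z [|z' p]] [/= abp eab] <-].
- by rewrite eab eqxx in nab.
- by move: abp; rewrite eab andbT (negbTE nadj).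
- by rewrite lee_fin ler_nat.
Qed.

Lemma gdist_refl a : gdist R nbr a a = 0.
Proof.
by apply/eqP; rewrite eq_le gdist_ge0 andbT; apply: ereal_inf_lbound; exists [::].
Qed.

Lemma gdist_le1 a b : adj nbr a b -> (gdist R nbr a b <= 1)%E.
Proof. by move=> ab; apply: ereal_inf_lbound; exists [:: b] => //=; rewrite ab. Qed.

End GraphDistance.

Lemma size_Q_Delta (T : eqType) (nbr : T -> seq T) u v :
  (size (Q nbr u v) + size (Delta nbr u v))%N = deg nbr u.
Proof. by rewrite /Q /Delta !size_filter addnC count_predC. Qed.

Lemma size_Delta_sym (T : eqType) (nbr : T -> seq T) u v :
  uniq (nbr u) -> uniq (nbr v) -> size (Delta nbr u v) = size (Delta nbr v u).
Proof.
move=> uu uv; apply: perm_size; apply: uniq_perm; rewrite ?filter_uniq // => a.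
by rewrite !mem_filter andbC.
Qed.

Lemma sum_unif_nbr (R : realType) (T : eqType) (nbr : T -> seq T) v (F : T -> R) :
  \sum_(a <- nbr v) F a * unif_nbr R nbr v a = (\sum_(a <- nbr v) F a) / (deg nbr v)%:R.
Proof.
by rewrite mulr_suml !big_seq; apply: eq_bigr => a va; rewrite /unif_nbr va.
Qed.

Lemma oneBe_eq (R : realDomainType) (w : \bar R) (r : R) :
  (1 - w)%E = r%:E <-> w = (1 - r)%:E.
Proof. by case: w => [w||] //=; split=> [[<-] | [->]]; congr EFin; ring. Qed.

Section CurvatureBounds.
Variables (R : realType) (T : eqType) (nbr : T -> seq T).
Hypothesis uniq_nbr : forall v, uniq (nbr v).
Variables (x y : T) (d : nat).
Hypotheses (hdx : deg nbr x = d) (hdy : deg nbr y = d).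

Local Notation W :=
  (W1 (@gdist R T nbr) (nbr x) (nbr y) (unif_nbr R nbr x) (unif_nbr R nbr y)).

Lemma mem_Q u v a : (a \in Q nbr u v) = (a \in nbr u) && (a \notin nbr v).
Proof. by rewrite mem_filter andbC. Qed.

Lemma size_Q_sym : size (Q nbr y x) = size (Q nbr x y).
Proof.
apply/eqP; rewrite -(eqn_add2r (size (Delta nbr x y))) size_Q_Delta.
by rewrite (size_Delta_sym (uniq_nbr x) (uniq_nbr y)) size_Q_Delta hdx hdy.
Qed.

Lemma W1_le_matching (sigma : T -> T) :
    {in Q nbr x y &, injective sigma} ->
    {in Q nbr x y, forall a, sigma a \in Q nbr y x} ->
    {in Q nbr y x, forall b, exists2 a, a \in Q nbr x y & sigma a = b} ->
    {in Q nbr x y, forall a, adj nbr a (sigma a)} ->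
  (W <= ((size (Q nbr x y))%:R / d%:R)%:E)%E.
Proof.
move=> s_inj s_into s_onto s_adj.
pose tau a := if a \in nbr y then a else sigma a.
have tau_into : {in nbr x, forall a, tau a \in nbr y}.
  move=> a ax; rewrite /tau; case: ifP => // /negbT ay.
  by have := s_into a; rewrite !mem_Q ax ay => /(_ isT) /andP [].
have tau_inj : {in nbr x &, injective tau}.
  have sigma_notx a : a \in nbr x -> a \notin nbr y -> sigma a \notin nbr x.
    by move=> ax ay; have := s_into a; rewrite !mem_Q ax ay => /(_ isT) /andP [].
  move=> a a' ax a'x; rewrite /tau.
  case: ifP => [ay | /negbT ay]; case: ifP => [a'y | /negbT a'y].
  - by [].
  - by move=> e; move: (sigma_notx a' a'x a'y); rewrite -e ax.
  - by move=> e; move: (sigma_notx a ax ay); rewrite e a'x.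
  - by apply: s_inj; rewrite mem_Q ?ax ?a'x ?ay ?a'y.
have tau_onto : {in nbr y, forall b, exists2 a, a \in nbr x & tau a = b}.
  move=> b yb; case: (boolP (b \in nbr x)) => [xb | nxb].
    by exists b; rewrite // /tau yb.
  have bQ : b \in Q nbr y x by rewrite mem_Q yb nxb.
  have [a aQ <-] := s_onto b bQ.
  by move: (aQ); rewrite mem_Q => /andP [ax ay]; exists a; rewrite // /tau (negbTE ay).
have unif_d v : deg nbr v = d -> {in nbr v, forall a, unif_nbr R nbr v a = d%:R^-1}.
  by move=> <- a va; rewrite /unif_nbr va.
have d_inv_ge0 : 0 <= d%:R^-1 :> R by rewrite invr_ge0.
apply: le_trans (W1_le_bijection (@gdist R T nbr) d_inv_ge0 (uniq_nbr x) (uniq_nbr y)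
  tau_inj tau_into tau_onto (unif_d x hdx) (unif_d y hdy)) _.
apply: (@le_trans _ _ (\sum_(a <- nbr x) (d%:R^-1 * (a \notin nbr y)%:R)%:E)%E).
  rewrite !big_seq; apply: lee_sum => a ax; rewrite EFinM lee_wpmul2l ?lee_fin //.
  rewrite /tau; case: ifP => [ay | /negbT ay]; first by rewrite gdist_refl.
  by rewrite gdist_le1 // s_adj // mem_Q ax ay.
by rewrite sumEFin -mulr_sumr sumr_count -size_filter mulrC.
Qed.

Lemma W1_ge_hall_defect (S : pred T) :
  ((((size (Q nbr x y))%:R + (count S (Q nbr x y))%:R
      - (count (fun b => has (fun a => S a && adj nbr a b) (Q nbr x y)) (Q nbr y x))%:R)
     / d%:R)%:E <= W)%E.
Proof.
set NS := fun b => has _ _.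
pose f a : R := 1 + (S a && (a \notin nbr y))%:R.
pose g b : R := (b \in nbr x)%:R + (NS b && (b \notin nbr x))%:R.
have pot a b : a \in nbr x -> b \in nbr y -> ((f a - g b)%:E <= gdist R nbr a b)%E.
  move=> ax yb; have [eab|nab] := eqVneq a b.
    by subst b; rewrite gdist_refl /f /g ax yb /= !andbF addr0 subrr.
  have g_ge0 : 0 <= g b by rewrite addr_ge0.
  have g_ge1 : NS b -> 1 <= g b by rewrite /g => ->; case: (b \in nbr x) => /=; lra.
  move: g_ge0 g_ge1; rewrite /f; move: (g b) => gb g_ge0 g_ge1.
  have [Sa|nSa] := boolP (S a && (a \notin nbr y)); last first.
    by apply: le_trans (gdist_ge1 _ _ nab); rewrite lee_fin /=; lra.
  have [ab|nab'] := boolP (adj nbr a b); last first.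
    by apply: le_trans (gdist_ge2 _ nab nab'); rewrite lee_fin /=; lra.
  have NSb : NS b.
    by case/andP: Sa => Sa ay; apply/hasP; exists a; rewrite ?mem_Q ?ax ?Sa.
  by apply: le_trans (gdist_ge1 _ _ nab); rewrite lee_fin /=; move: (g_ge1 NSb); lra.
apply: le_trans (W1_ge_potential _ _ pot).
rewrite lee_fin le_eqVlt; apply/predU1l.
rewrite !sum_unif_nbr hdx hdy -mulrBl; congr (_ / _).
have sum1 : \sum_(a <- nbr x) (1 : R) = d%:R by rewrite -hdx /deg -sum1_size natr_sum.
have eS : count (fun a => S a && (a \notin nbr y)) (nbr x) = count S (Q nbr x y).
  by rewrite count_filter.
have eNS : count (fun b => NS b && (b \notin nbr x)) (nbr y) = count NS (Q nbr y x).
  by rewrite count_filter.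
have eD : count (mem (nbr x)) (nbr y) = size (Delta nbr x y).
  by rewrite (size_Delta_sym (uniq_nbr x) (uniq_nbr y)) size_filter.
rewrite /f /g !big_split /= !sumr_count sum1 eS eNS eD -hdx -(size_Q_Delta nbr x y) natrD.
lra.
Qed.

Lemma W1_ge_size_Q : (((size (Q nbr x y))%:R / d%:R)%:E <= W)%E.
Proof.
have := W1_ge_hall_defect pred0.
rewrite count_pred0 (eq_count (a2 := pred0)) => [|b]; last by apply/hasP => -[].
by rewrite count_pred0 addr0 subr0.
Qed.

Lemma W1_eq_hall_cond (S : pred T) : (0 < d)%N ->
    W = ((size (Q nbr x y))%:R / d%:R)%:E ->
  (count S (Q nbr x y)
     <= count (fun b => has (fun a => S a && adj nbr a b) (Q nbr x y)) (Q nbr y x))%N.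
Proof.
move=> d_gt0 W_eq; have := W1_ge_hall_defect S.
by rewrite W_eq lee_fin ler_pM2r ?invr_gt0 ?ltr0n // -addrA gerDl subr_le0 ler_nat.
Qed.

Lemma kappa_eq_Delta : (0 < d)%N ->
  kappa R nbr x y = ((size (Delta nbr x y))%:R / d%:R)%:E <->
  W = ((size (Q nbr x y))%:R / d%:R)%:E.
Proof.
move=> d_gt0; rewrite /kappa oneBe_eq.
suff -> : 1 - (size (Delta nbr x y))%:R / d%:R = (size (Q nbr x y))%:R / d%:R :> R by [].
have : d%:R != 0 :> R by rewrite pnatr_eq0 -lt0n.
by rewrite -hdx -(size_Q_Delta nbr x y) natrD => d_neq0; field.
Qed.

End CurvatureBounds.

Theorem theorem4p2 (R : realType) (T : eqType) (nbr : T -> seq T)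
  (G : simple_graph nbr) (x y : T) (d : nat)
  (hxy : adj nbr x y) (hdx : deg nbr x = d) (hdy : deg nbr y = d) :
  kappa R nbr x y = ((size (Delta nbr x y))%:R / d%:R)%:E <->
  exists sigma : T -> T,
    [/\ {in Q nbr x y &, injective sigma},
        {in Q nbr x y, forall a, sigma a \in Q nbr y x},
        {in Q nbr y x, forall b, exists2 a, a \in Q nbr x y & sigma a = b}
      & {in Q nbr x y, forall a, adj nbr a (sigma a)}].
Proof.
have [uniq_nbr _ _] := G.
have d_gt0 : (0 < d)%N by rewrite -hdx /deg -has_predT; apply/hasP; exists y.
rewrite (kappa_eq_Delta R y hdx d_gt0).
split=> [W_eq | [sigma [s_inj s_into s_onto s_adj]]]; last first.
  apply/eqP; rewrite eq_le (W1_ge_size_Q R uniq_nbr hdx hdy) andbT.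
  exact: (W1_le_matching R uniq_nbr hdx hdy s_inj s_into s_onto s_adj).
have uQ u v : uniq (Q nbr u v) by rewrite filter_uniq.
have hall S := W1_eq_hall_cond uniq_nbr hdx hdy S d_gt0 W_eq.
have [f [f_into f_inj]] := hall_matching_seq (uQ x y) (uQ y x) hall.
exists f; split=> // [a /f_into [] // | | a /f_into [] //].
apply: inj_in_size_onto (uQ x y) _ f_inj _ => [|a /f_into [] //].
by rewrite (size_Q_sym uniq_nbr hdx hdy).
Qed.
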